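(* Let $f_1,f_2,m$ be integers such that $f(x)=f_1x+f_2x^2 \bmod N$ is a permutation of $\mathbb{Z}_N$. Let $\alpha=\mathrm{lcm}(\lambda,\rho)$ and $f'(x)=(f_1+2m\alpha f_2)x+f_2x^2 \bmod N$. Then $f'$ is a permutation of $\mathbb{Z}_N$, and the graphs $G_f$ and $G_{f'}$ are isomorphic.
   Context: Fix positive integers $\lambda,\rho$ and a positive integer $N$ divisible by both $\lambda$ and $\rho$. Put $n=N/\lambda$ and $r=N/\rho$, and identify $\mathbb{Z}_N$ with $\{0,1,\dots,N-1\}$. For a permutation $f$ of $\mathbb{Z}_N$, define the bipartite multigraph $G_f$ as follows: - it has variable nodes $v_0,\dots,v_{n-1}$ and check nodes $c_0,\dots,c_{r-1}$; - it has $N$ edges $e_0,\dots,e_{N-1}$, where edge $e_i$ (left-label $i$, right-label $f(i)$) joins $v_{\lfloor i/\lambda\rfloor}$ and $c_{\lfloor f(i)/\rho\rfloor}$. An isomorphism of such graphs is a bijection that maps variable nodes to variable nodes and check nodes to check nodes and preserves the number of edges between every pair of nodes. *)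

From mathcomp Require Import all_boot all_order all_algebra all_fingroup.
Set Implicit Arguments. Unset Strict Implicit. Unset Printing Implicit Defensive.
Import GRing.Theory Num.Theory.

Definition qpp (N : nat) (c1 c2 : int) (x : nat) : nat :=
  `|((c1 * x%:Z + c2 * (x%:Z ^+ 2)) %% N%:Z)%Z|%N.

Definition is_perm_ZN (N : nat) (g : nat -> nat) : Prop :=
  exists p : {perm 'I_N}, forall i : 'I_N, val (p i) = g (val i).

(* Number of edges of G_g between variable node v_a and check node c_b:
   edges e_i (i < N) with floor(i/lam) = a and floor(g(i)/rho) = b. *)
Definition edge_mult (N lam rho : nat) (g : nat -> nat) (a b : nat) : nat :=
  #|[set i : 'I_N | (val i %/ lam == a) && (g (val i) %/ rho == b)]|.

Definition graph_iso (N lam rho : nat) (g h : nat -> nat) : Prop :=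
  exists (s : {perm 'I_(N %/ lam)}) (t : {perm 'I_(N %/ rho)}),
    forall (a : 'I_(N %/ lam)) (b : 'I_(N %/ rho)),
      edge_mult N lam rho g (val a) (val b)
      = edge_mult N lam rho h (val (s a)) (val (t b)).

From mathcomp Require Import all_boot all_order all_algebra all_fingroup.
From mathcomp Require Import ring.
Import GRing.Theory Num.Theory.
Set Implicit Arguments. Unset Strict Implicit.

(* With [D = m alpha], expanding the square gives [f(x + D) = f'(x) + f(D)]
   exactly.  So, mod [N], translating the left labels by [d = D mod N] turns
   the right labels of [G_f] into those of [G_f'] translated by [c = f(d)].
   As [lam] and [rho] divide [d], and hence [rho] divides [c], both
   translations move whole blocks of [lam] (resp. [rho]) consecutive labels:
   they induce cyclic rotations of the variable and of the check nodes, which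
   form the isomorphism. *)

Section CyclicShift.

Variable n : nat.

Lemma ord_gt0 (x : 'I_n) : (0 < n)%N.
Proof. by case: n x => [[]|]. Qed.

Definition shift_fun (k : nat) (x : 'I_n) : 'I_n :=
  Ordinal (ltn_pmod (x + k) (ord_gt0 x)).

Lemma shift_fun_inj k : injective (shift_fun k).
Proof.
move=> x y /(congr1 val) /= /eqP; rewrite eqn_modDr !modn_small // => /eqP.
exact: val_inj.
Qed.

Definition shift_perm k : {perm 'I_n} := perm (@shift_fun_inj k).

Lemma shift_permE k x : val (shift_perm k x) = ((x + k) %% n)%N.
Proof. by rewrite permE. Qed.

Lemma eq_shift_permV k (a : 'I_n) u : (u < n)%N ->
  (u == val ((shift_perm k)^-1 a)%g) = ((u + k) %% n == val a)%N.
Proof.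
move=> u_lt_n; apply/eqP/eqP => [->|u_k]; first by rewrite -shift_permE permKV.
have <- : shift_perm k (Ordinal u_lt_n) = a by apply: val_inj; rewrite shift_permE.
by rewrite permK.
Qed.

End CyclicShift.

Lemma divn_modDr (l N d x : nat) : (0 < l)%N -> (l %| N)%N -> (l %| d)%N ->
  ((x + d) %% N) %/ l = (x %/ l + d %/ l) %% (N %/ l).
Proof.
move=> l_gt0 /dvdnP[n ->] /dvdnP[k ->].
rewrite !mulnK //.
have -> : x + k * l = (x %/ l + k) * l + x %% l by rewrite {1}(divn_eq x l) mulnDl addnAC.
have divn_mod : x %% l %/ l = 0 by rewrite divn_small ?ltn_pmod.
case: (posnP n) => [->|n_gt0]; first by rewrite mul0n !modn0 divnMDl // divn_mod addn0.
rewrite {1}(divn_eq (x %/ l + k) n) mulnDl -mulnA -addnA modnMDl modn_small.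
  by rewrite divnMDl // divn_mod addn0.
apply: (@leq_trans (((x %/ l + k) %% n).+1 * l)).
  by rewrite mulSn addnC ltn_add2r ltn_pmod.
by rewrite leq_mul2r ltn_pmod ?orbT.
Qed.

Section ShiftConjugate.

Variables (N lam rho d c : nat) (g h : nat -> nat).
Hypothesis h_lt : forall i, (h i < N)%N.
Hypothesis g_shift : forall i, g ((i + d) %% N)%N = ((h i + c) %% N)%N.

Lemma is_perm_ZN_shift : is_perm_ZN N g -> is_perm_ZN N h.
Proof.
move=> [p p_g].
pose q i := ((shift_perm N c)^-1 (p (shift_perm N d i)))%g.
have q_inj : injective q by move=> x y /perm_inj /perm_inj /perm_inj.
exists (perm q_inj) => i; rewrite permE; apply/eqP.
by rewrite eq_sym eq_shift_permV // p_g shift_permE g_shift.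
Qed.

Hypotheses (lam_gt0 : (0 < lam)%N) (rho_gt0 : (0 < rho)%N).
Hypotheses (lam_dvdN : (lam %| N)%N) (rho_dvdN : (rho %| N)%N).
Hypotheses (lam_dvd_d : (lam %| d)%N) (rho_dvd_c : (rho %| c)%N).

Lemma graph_iso_shift : graph_iso N lam rho g h.
Proof.
exists (shift_perm (N %/ lam) (d %/ lam))^-1%g.
exists (shift_perm (N %/ rho) (c %/ rho))^-1%g => a b.
rewrite /edge_mult -[LHS](card_preimset _ (@perm_inj _ (shift_perm N d))).
apply: eq_card => i; rewrite !inE shift_permE g_shift.
rewrite eq_shift_permV; last by rewrite ltn_divLR // (divnK lam_dvdN) ltn_ord.
rewrite eq_shift_permV; last by rewrite ltn_divLR // (divnK rho_dvdN) h_lt.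
by rewrite !divn_modDr.
Qed.

End ShiftConjugate.

Local Open Scope ring_scope.

Lemma quad_modz (N c1 c2 x y : int) : (x = y %[mod N])%Z ->
  (c1 * x + c2 * x ^+ 2 = c1 * y + c2 * y ^+ 2 %[mod N])%Z.
Proof.
move=> /eqP; rewrite eqz_mod_dvd => N_dvd_xy; apply/eqP; rewrite eqz_mod_dvd.
have -> : c1 * x + c2 * x ^+ 2 - (c1 * y + c2 * y ^+ 2)
  = (x - y) * (c1 + c2 * (x + y)) by ring.
exact: dvdz_mulr.
Qed.

Section ResidueModN.

Variable N : nat.
Hypothesis N_gt0 : (0 < N)%N.

Lemma abs_modzE (x : int) : (`|(x %% N%:Z)%Z|%N)%:Z = (x %% N%:Z)%Z.
Proof. by rewrite abszE ger0_norm // modz_ge0 // eqz_nat -lt0n. Qed.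

Lemma abs_modz_lt (x : int) : (`|(x %% N%:Z)%Z| < N)%N.
Proof. by rewrite -ltz_nat abs_modzE ltz_pmod // ltz_nat. Qed.

Lemma dvdn_abs_modz (k : nat) (x : int) : (k %| N)%N -> (k%:Z %| x)%Z ->
  (k %| `|(x %% N%:Z)%Z|)%N.
Proof.
rewrite -[(k %| N)%N]/(k%:Z %| N%:Z)%Z => k_dvdN.
by rewrite {1}(divz_eq x N%:Z) (rpredDl _ (dvdz_mull _ k_dvdN)).
Qed.

Lemma qppE c1 c2 x : (qpp N c1 c2 x)%:Z = ((c1 * x%:Z + c2 * x%:Z ^+ 2) %% N%:Z)%Z.
Proof. exact: abs_modzE. Qed.

Lemma dvdn_qpp c1 c2 (k x : nat) : (k %| N)%N -> (k %| x)%N -> (k %| qpp N c1 c2 x)%N.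
Proof.
move=> k_dvdN; rewrite -[(k %| x)%N]/(k%:Z %| x%:Z)%Z => k_dvdx.
by apply: dvdn_abs_modz; rewrite // rpredD ?dvdz_mull // expr2 !dvdz_mull.
Qed.

Lemma qpp_shift c1 c2 (D : int) (d i : nat) : d%:Z = (D %% N%:Z)%Z ->
  qpp N c1 c2 ((i + d) %% N)%N
  = ((qpp N (c1 + 2 * D * c2) c2 i + qpp N c1 c2 d) %% N)%N.
Proof.
move=> dE; apply/eqP; rewrite -eqz_nat -!modz_nat !PoszD !qppE -modz_nat PoszD.
rewrite (@quad_modz _ _ _ _ (i%:Z + D)); last by rewrite dE modzDmr modz_mod.
rewrite (@quad_modz _ _ _ d%:Z D) ?modzDm; last by rewrite dE modz_mod.
by apply/eqP; congr (_ %% _)%Z; ring.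
Qed.

End ResidueModN.

Theorem proposition3 (lam rho N : nat) (f1 f2 m : int) :
  (0 < lam)%N -> (0 < rho)%N -> (0 < N)%N ->
  (lam %| N)%N -> (rho %| N)%N ->
  is_perm_ZN N (qpp N f1 f2) ->
  let alpha : int := Posz (lcmn lam rho) in
  let f1' : int := (f1 + 2 * m * alpha * f2)%R in
  is_perm_ZN N (qpp N f1' f2) /\
  graph_iso N lam rho (qpp N f1 f2) (qpp N f1' f2).
Proof.
move=> lam_gt0 rho_gt0 N_gt0 lam_dvdN rho_dvdN f_perm alpha f1'.
pose d := `|(m * alpha %% N%:Z)%Z|%N.
have dE : d%:Z = (m * alpha %% N%:Z)%Z by rewrite abs_modzE.
have f_shift i : qpp N f1 f2 ((i + d) %% N)%N = ((qpp N f1' f2 i + qpp N f1 f2 d) %% N)%N.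
  by rewrite (qpp_shift _ _ _ _ dE) // /f1' mulrA.
have dvdn_d k : (k %| lcmn lam rho)%N -> (k %| d)%N.
  move=> k_dvd_alpha; apply: dvdn_abs_modz; last exact: dvdz_mull.
  by apply: dvdn_trans k_dvd_alpha _; rewrite dvdn_lcm lam_dvdN.
split; first exact: is_perm_ZN_shift (fun i => abs_modz_lt N_gt0 _) f_shift f_perm.
apply: graph_iso_shift (fun i => abs_modz_lt N_gt0 _) f_shift _ _ _ _ _ _ => //.
  exact/dvdn_d/dvdn_lcml.
exact/dvdn_qpp/dvdn_d/dvdn_lcmr.
Qed.
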